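(* Let $|\Psi\rangle=|\Psi'\rangle\otimes|\Phi\rangle$, where $|\Psi'\rangle$ and $|\Phi\rangle$ are $M$-party stabilizer states (each party $\alpha$ holding some qubits of each), and suppose the stabilizer group $S_\Phi$ of $|\Phi\rangle$ satisfies $S_\Phi=\sum_{\alpha\in M}(S_\Phi)_{\hat\alpha}$. Then $\Gamma(\Psi)=\{\rho'\otimes|\Phi\rangle\langle\Phi|:\ \rho'\in\Gamma(\Psi')\}$.
   Context: Let $G^n\cong\mathbb{F}_2^{2n}$, with elements $f=(a_1,b_1,\dots,a_n,b_n)$; $\sigma_{00}=I,\sigma_{10}=\sigma^x,\sigma_{01}=\sigma^z,\sigma_{11}=\sigma^y$, $\sigma(f)=\sigma_{a_1b_1}\otimes\cdots\otimes\sigma_{a_nb_n}$; symplectic form $\omega(f,f')=\sum_j(a_jb_j'+b_ja_j')\bmod 2$. A stabilizer state with stabilizer group $S$ ($S$ self-dual, i.e. $S=\{f:\omega(f,g)=0\ \forall g\in S\}$) is the unique up-to-phase unit vector with $\sigma(f)|\Psi\rangle=\epsilon(f)|\Psi\rangle$ for all $f\in S$ for fixed consistent signs. In the $M$-party setting, party $\alpha$ holds $n_\alpha$ qubits; $f_\alpha$ is the restriction of $f$ to party $\alpha$'s qubits; co-local subgroup $S_{\hat\alpha}=\{g\in S:g_\alpha=0\}$. For an $M$-party pure state $|\Psi\rangle$, $\Gamma(\Psi)$ is the set of density operators $\rho$ on the same qubits with $\mathrm{Tr}_\alpha\rho=\mathrm{Tr}_\alpha|\Psi\rangle\langle\Psi|$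 for all $\alpha\in M$, $\mathrm{Tr}_\alpha$ being the partial trace over all qubits of party $\alpha$. *)

(* Amplitudes live in an arbitrary numClosedFieldType C
   (e.g. the complex numbers R[i]). *)
From HB Require Import structures.
From mathcomp Require Import all_boot all_order all_algebra.
Set Implicit Arguments. Unset Strict Implicit. Unset Printing Implicit Defensive.
Import Order.TTheory GRing.Theory Num.Theory.
Local Open Scope ring_scope.

(* computational basis states of n qubits *)
Definition bits (n : nat) := {ffun 'I_n -> bool}.
(* elements f = (a_1,b_1,...,a_n,b_n) of G^n = F_2^{2n} *)
Definition pauli (n : nat) := {ffun 'I_n -> bool * bool}.

Section Defs.
Variable C : numClosedFieldType.

(* <y| sigma_{ab} |x> with sigma_{ab} = i^{ab} X^a Z^b
   (sigma_00 = I, sigma_10 = X, sigma_01 = Z, sigma_11 = Y) *)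
Definition sigma1 (ab : bool * bool) (y x : bool) : C :=
  if y == (x (+) ab.1) then 'i ^+ (ab.1 && ab.2) * (-1) ^+ (ab.2 && x) else 0.

Definition sigma n (f : pauli n) (y x : bits n) : C :=
  \prod_(j < n) sigma1 (f j) (y j) (x j).

Definition op n := bits n -> bits n -> C.

Definition apply_op n (A : op n) (v : bits n -> C) (y : bits n) : C :=
  \sum_(x : bits n) A y x * v x.

Definition omega n (f g : pauli n) : bool :=
  odd (\sum_(j < n) (((f j).1 && (g j).2) + ((f j).2 && (g j).1)))%N.

Definition self_dual n (S : {set pauli n}) : Prop :=
  forall f, (f \in S) = [forall g in S, ~~ omega f g].

Definition unit_vec n (v : bits n -> C) : Prop :=
  \sum_(x : bits n) v x * (v x)^* = 1.

Definition stabilizer_state n (S : {set pauli n}) (psi : bits n -> C) : Prop :=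
  self_dual S /\ unit_vec psi /\
  forall f, f \in S -> exists e : C, (e = 1 \/ e = -1) /\
    forall y, apply_op (sigma f) psi y = e * psi y.

Definition pxor n (f g : pauli n) : pauli n :=
  [ffun j => ((f j).1 (+) (g j).1, (f j).2 (+) (g j).2)].
Definition pzero n : pauli n := [ffun _ => (false, false)].

Definition colocal n M (party : 'I_n -> 'I_M) (S : {set pauli n}) (a : 'I_M)
  : {set pauli n} :=
  [set g in S | [forall j, (party j == a) ==> (g j == (false, false))]].

Definition sum_of_colocal n M (party : 'I_n -> 'I_M) (S : {set pauli n}) : Prop :=
  forall g, g \in S <->
    exists h : 'I_M -> pauli n,
      (forall a, h a \in colocal party S a) /\ g = \big[@pxor n/pzero n]_(a < M) h a.

Definition density n (rho : op n) : Prop :=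
  (forall v : bits n -> C,
     0 <= \sum_(x : bits n) \sum_(y : bits n) (v x)^* * rho x y * v y) /\
  \sum_(x : bits n) rho x x = 1.

Definition proj n (psi : bits n -> C) : op n := fun x y => psi x * (psi y)^*.

Definition merge n M (party : 'I_n -> 'I_M) (a : 'I_M) (x z : bits n) : bits n :=
  [ffun j => if party j == a then z j else x j].

(* matrix element of Tr_a rho (partial trace over all qubits of party a);
   it depends only on the bits of x, y outside party a *)
Definition ptrace n M (party : 'I_n -> 'I_M) (a : 'I_M) (rho : op n)
  (x y : bits n) : C :=
  \sum_(z : bits n | [forall j, (party j != a) ==> ~~ z j])
     rho (merge party a x z) (merge party a y z).

Definition Gamma n M (party : 'I_n -> 'I_M) (psi : bits n -> C) (rho : op n) : Prop :=
  density rho /\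
  forall a x y, ptrace party a rho x y = ptrace party a (proj psi) x y.

(* tensor products: first n1 qubits, then n2 qubits *)
Definition lpart n1 n2 (x : bits (n1 + n2)) : bits n1 := [ffun i => x (lshift n2 i)].
Definition rpart n1 n2 (x : bits (n1 + n2)) : bits n2 := [ffun i => x (rshift n1 i)].

Definition join_party n1 n2 M (p1 : 'I_n1 -> 'I_M) (p2 : 'I_n2 -> 'I_M)
  (j : 'I_(n1 + n2)) : 'I_M :=
  match split j with inl i => p1 i | inr i => p2 i end.

Definition tensor_vec n1 n2 (u : bits n1 -> C) (v : bits n2 -> C)
  : bits (n1 + n2) -> C :=
  fun x => u (lpart x) * v (rpart x).

Definition tensor_op n1 n2 (A : op n1) (B : op n2) : op (n1 + n2) :=
  fun x y => A (lpart x) (lpart y) * B (rpart x) (rpart y).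

End Defs.

From Pilot Require Import Defs.
From HB Require Import structures.
From mathcomp Require Import all_boot all_order all_algebra ring.
From Stdlib Require Import FunctionalExtensionality.
Import Order.TTheory GRing.Theory Num.Theory.
Local Open Scope ring_scope.
Set Implicit Arguments. Unset Strict Implicit. Unset Printing Implicit Defensive.

(* Let g be a stabilizer of Phi acting trivially on the qubits of some party a.
   Then Tr(rho (1 ⊗ sigma(g))) depends only on Tr_a rho, so for every rho in
   Gamma(Psi) it equals <Psi|1 ⊗ sigma(g)|Psi> = ±1, the eigenvalue of g on Phi.
   A Hermitian involution whose expectation on a density operator is ±1 fixes
   it from both sides, so every column and every row of rho, read in the
   second register, is an eigenvector of all colocal stabilizers, with the
   eigenvalues of Phi.  Every Pauli operator outside S_Phi anticommutes with
   some element of S_Phi (self-duality), hence with a colocal one, and the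
   completeness relation sum_f sigma(f)|Phi><Phi|sigma(f) = 2^n 1 then forces
   such a vector to be a multiple of Phi.  Hence rho = rho' ⊗ |Phi><Phi|, and
   the marginal conditions transfer between rho and rho'. *)

Definition catb n1 n2 (a : bits n1) (b : bits n2) : bits (n1 + n2) :=
  [ffun j => match split j with inl i => a i | inr i => b i end].

Lemma lpart_catb n1 n2 (a : bits n1) (b : bits n2) : lpart (catb a b) = a.
Proof. by apply/ffunP=> i; rewrite !ffunE (unsplitK (inl i)). Qed.

Lemma rpart_catb n1 n2 (a : bits n1) (b : bits n2) : rpart (catb a b) = b.
Proof. by apply/ffunP=> i; rewrite !ffunE (unsplitK (inr i)). Qed.

Lemma catb_parts n1 n2 (x : bits (n1 + n2)) : catb (lpart x) (rpart x) = x.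
Proof.
apply/ffunP=> j; rewrite !ffunE; case: splitP => i Ej.
  by rewrite (_ : j = lshift n2 i) ?ffunE //; apply: val_inj.
by rewrite (_ : j = rshift n1 i) ?ffunE //; apply: val_inj.
Qed.

Lemma eq_bits_parts n1 n2 (y x : bits (n1 + n2)) :
  (y == x) = (lpart y == lpart x) && (rpart y == rpart x).
Proof.
apply/eqP/andP => [-> // | [/eqP l_eq /eqP r_eq]].
by rewrite -(catb_parts y) -(catb_parts x) l_eq r_eq.
Qed.

Lemma join_party_lshift n1 n2 M (p1 : 'I_n1 -> 'I_M) (p2 : 'I_n2 -> 'I_M) i :
  join_party p1 p2 (lshift n2 i) = p1 i.
Proof. by rewrite /join_party (unsplitK (inl i)). Qed.

Lemma join_party_rshift n1 n2 M (p1 : 'I_n1 -> 'I_M) (p2 : 'I_n2 -> 'I_M) i :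
  join_party p1 p2 (rshift n1 i) = p2 i.
Proof. by rewrite /join_party (unsplitK (inr i)). Qed.

Lemma omega_pxor n (f g h : pauli n) : omega f (pxor g h) = omega f g (+) omega f h.
Proof.
rewrite /omega !(big_morph odd oddD (erefl (odd 0))) -big_split /=.
apply: eq_bigr => j _; rewrite ffunE /=.
by case: (f j) => [[] []]; case: (g j) => [[] []]; case: (h j) => [[] []].
Qed.

Lemma omega_pzero n (f : pauli n) : omega f (pzero n) = false.
Proof. by rewrite /omega big1 // => j _; rewrite ffunE /=; case: (f j) => [[] []]. Qed.

Lemma omega_bigxor n M (f : pauli n) (h : 'I_M -> pauli n) :
  omega f (\big[@pxor n/pzero n]_(a < M) h a) = \big[addb/false]_(a < M) omega f (h a).
Proof. exact: (big_morph (omega f) (omega_pxor f) (omega_pzero f)). Qed.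

(* Self-duality provides some g in S with omega f g; as g is a sum of colocal
   elements, omega f is nonzero on one of them. *)
Lemma anticommuting_colocal n M (party : 'I_n -> 'I_M) (S : {set pauli n}) f :
  self_dual S -> sum_of_colocal party S -> f \notin S ->
  exists g, (exists a, g \in colocal party S a) /\ omega f g.
Proof.
move=> dualS sumS fNS; move: (dualS f); rewrite (negbTE fNS) => /esym/forallPn.
case=> g; rewrite negb_imply negbK => /andP[gS fg].
have [h [h_colocal g_sum]] := (sumS g).1 gS.
rewrite g_sum omega_bigxor in fg; have [a fha] : exists a, omega f (h a).
  apply/existsP; apply: contraLR fg; rewrite negb_exists => /forallP fh.
  by rewrite big1 // => a _; apply/negbTE.
by exists (h a); split; first by exists a.
Qed.

Section Pauli.
Variable C : numClosedFieldType.

Lemma mulCii : ('i : C) * 'i = -1.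
Proof. by rewrite -expr2 sqrCi. Qed.

Ltac pauli_table :=
  rewrite /sigma1 /= ?rmorphM /= ?(conjC0, conjC1, conjCN1, conjCi, expr0, expr1,
    mulr0, mul0r, mulr1, mul1r, mulrN, mulNr, opprK, mulCii);
  try ring.

Lemma sigma1_adj ab y x : (sigma1 C ab y x)^* = sigma1 C ab x y.
Proof. by case: ab => [[] []]; case: y; case: x; pauli_table. Qed.

Lemma sigma1_invol ab y x : \sum_z sigma1 C ab y z * sigma1 C ab z x = (y == x)%:R.
Proof. by rewrite big_bool; case: ab => [[] []]; case: y; case: x; pauli_table. Qed.

Lemma sigma1_commute (f g : bool * bool) y x :
  \sum_z sigma1 C g y z * sigma1 C f z x =
  (-1) ^+ ((f.1 && g.2) + (f.2 && g.1))%N * \sum_z sigma1 C f y z * sigma1 C g z x.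
Proof.
rewrite !big_bool; case: f => [[] []]; case: g => [[] []]; case: y; case: x;
  pauli_table.
Qed.

Lemma sigma1_complete y x y' x' :
  \sum_ab (sigma1 C ab y' x')^* * sigma1 C ab y x = 2%:R * ((y == y') && (x == x'))%:R.
Proof.
rewrite -(pair_bigA _ (fun a b => (sigma1 C (a, b) y' x')^* * sigma1 C (a, b) y x)).
by rewrite /= !big_bool; case: y; case: x; case: y'; case: x'; pauli_table.
Qed.

Lemma prod_natr_eq n (y x : bits n) : \prod_j ((y j == x j)%:R : C) = (y == x)%:R.
Proof.
have [-> | /eqP y_neq_x] := eqVneq y x; first by rewrite big1 // => j _; rewrite eqxx.
have [j yx_j] : exists j, y j != x j.
  by apply/existsP; apply: contra_notT y_neq_x => /existsPn yx; apply/ffunP => j; apply/eqP/negPn.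
by rewrite (bigD1 j) //= (negbTE yx_j) mul0r.
Qed.

Lemma sum_sigma_mul n (f g : pauli n) y x :
  \sum_z sigma C f y z * sigma C g z x =
  \prod_j \sum_b sigma1 C (f j) (y j) b * sigma1 C (g j) b (x j).
Proof. by rewrite bigA_distr_bigA; apply: eq_bigr => z _; rewrite -big_split. Qed.

Lemma sigma_adj n (f : pauli n) y x : (sigma C f y x)^* = sigma C f x y.
Proof. by rewrite rmorph_prod; apply: eq_bigr => j _; apply: sigma1_adj. Qed.

Lemma sigma_invol n (f : pauli n) y x :
  \sum_z sigma C f y z * sigma C f z x = (y == x)%:R.
Proof.
by rewrite sum_sigma_mul -prod_natr_eq; apply: eq_bigr => j _; apply: sigma1_invol.
Qed.

Lemma sigma_commute n (f g : pauli n) y x :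
  \sum_z sigma C g y z * sigma C f z x =
  (-1) ^+ omega f g * \sum_z sigma C f y z * sigma C g z x.
Proof.
rewrite /omega signr_odd -prodrXr !sum_sigma_mul -big_split /=.
by apply: eq_bigr => j _; apply: sigma1_commute.
Qed.

Lemma sigma_complete n (y x y' x' : bits n) :
  \sum_(f : pauli n) (sigma C f y' x')^* * sigma C f y x =
  2%:R ^+ n * ((y == y') && (x == x'))%:R.
Proof.
under eq_bigr do rewrite rmorph_prod -big_split /=.
rewrite -(bigA_distr_bigA (fun j ab => (sigma1 C ab (y' j) (x' j))^* * sigma1 C ab (y j) (x j))).
under eq_bigr do rewrite sigma1_complete.
rewrite big_split /= prodr_const card_ord -mulnb natrM -!prod_natr_eq -big_split /=.
by congr (_ * _); apply: eq_bigr => j _; rewrite -natrM mulnb.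
Qed.

End Pauli.

Section Stabilizer.
Variable C : numClosedFieldType.

Definition dotv n (u v : bits n -> C) : C := \sum_x (u x)^* * v x.

Definition eigvec n (A : op C n) (e : C) (v : bits n -> C) : Prop :=
  forall y, apply_op A v y = e * v y.

Lemma sign_sqr_conj (e : C) : e = 1 \/ e = -1 -> e * e = 1 /\ e^* = e.
Proof. by case=> ->; rewrite ?mulrNN mulr1 ?rmorphN rmorph1. Qed.

Lemma sumr_deltal (I : finType) (i0 : I) (F : I -> C) :
  \sum_i (i0 == i)%:R * F i = F i0.
Proof.
rewrite (bigD1 i0) //= eqxx mul1r big1 ?addr0 // => i i_neq.
by rewrite eq_sym (negbTE i_neq) mul0r.
Qed.

Lemma sumr_deltar (I : finType) (i0 : I) (F : I -> C) :
  \sum_i F i * (i == i0)%:R = F i0.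
Proof. by rewrite -[RHS](sumr_deltal i0); apply: eq_bigr => i _; rewrite mulrC eq_sym. Qed.

Lemma apply_op_mul n (A B : op C n) v y :
  apply_op A (apply_op B v) y = apply_op (fun y x => \sum_z A y z * B z x) v y.
Proof.
rewrite /apply_op; under eq_bigr do rewrite big_distrr /=.
rewrite exchange_big /=; apply: eq_bigr => x _.
by rewrite big_distrl /=; apply: eq_bigr => z _; rewrite mulrA.
Qed.

Lemma eq_apply_op n (A : op C n) u v : (forall x, u x = v x) ->
  forall y, apply_op A u y = apply_op A v y.
Proof. by move=> uv y; apply: eq_bigr => x _; rewrite uv. Qed.

Lemma apply_opZ n (A : op C n) (k : C) v y :
  apply_op A (fun x => k * v x) y = k * apply_op A v y.
Proof. by rewrite /apply_op big_distrr; apply: eq_bigr => x _ /=; rewrite mulrCA. Qed.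

Lemma dotv_sigma n (f : pauli n) u v :
  dotv u (apply_op (sigma C f) v) = dotv (apply_op (sigma C f) u) v.
Proof.
rewrite /dotv /apply_op; under eq_bigr do rewrite big_distrr /=.
rewrite exchange_big /=; apply: eq_bigr => z _.
rewrite rmorph_sum big_distrl /=; apply: eq_bigr => x _.
by rewrite rmorphM /= sigma_adj mulrCA mulrA.
Qed.

Lemma apply_sigma_anticommute n (f g : pauli n) v y : omega f g ->
  apply_op (sigma C g) (apply_op (sigma C f) v) y =
  - apply_op (sigma C f) (apply_op (sigma C g) v) y.
Proof.
move=> fg; rewrite !apply_op_mul /apply_op -sumrN; apply: eq_bigr => x _.
by rewrite sigma_commute fg expr1 mulN1r mulNr.
Qed.

Lemma dotv_anticommuting_eigvec n (f g : pauli n) (e : C) v w :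
  omega f g -> e = 1 \/ e = -1 -> eigvec (sigma C g) e v -> eigvec (sigma C g) e w ->
  dotv (apply_op (sigma C f) v) w = 0.
Proof.
move=> fg e_sign gv gw; have [ee ce] := sign_sqr_conj e_sign.
set u := apply_op (sigma C f) v; set c := dotv u w.
have c_opp : c = - c.
  transitivity (e * dotv u (apply_op (sigma C g) w)).
    rewrite /c /dotv big_distrr; apply: eq_bigr => y _ /=.
    by rewrite gw; transitivity (e * e * ((u y)^* * w y)); [rewrite ee mul1r | ring].
  rewrite dotv_sigma /dotv big_distrr -sumrN; apply: eq_bigr => y _ /=.
  rewrite /u apply_sigma_anticommute // (eq_apply_op _ gv) apply_opZ.
  rewrite rmorphN rmorphM /= ce.
  by transitivity (- (e * e) * ((apply_op (sigma C f) v y)^* * w y)); [ring | rewrite ee mulN1r].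
by move/eqP: c_opp; rewrite -subr_eq0 opprK -mulr2n mulrn_eq0 => /eqP.
Qed.

Lemma sum_pauli_proj n (Phi w : bits n -> C) y : unit_vec Phi ->
  \sum_(f : pauli n) apply_op (sigma C f) Phi y * dotv (apply_op (sigma C f) Phi) w =
  2%:R ^+ n * w y.
Proof.
move=> Phi_unit; rewrite /dotv /apply_op.
transitivity (\sum_(f : pauli n) \sum_x \sum_y' \sum_x'
   ((sigma C f y' x')^* * sigma C f y x) * (Phi x * (Phi x')^* * w y')).
  apply: eq_bigr => f _; rewrite big_distrl; apply: eq_bigr => x _.
  rewrite big_distrr; apply: eq_bigr => y' _; rewrite rmorph_sum big_distrl big_distrr.
  by apply: eq_bigr => x' _; rewrite rmorphM /=; ring.
rewrite exchange_big; under eq_bigr do rewrite exchange_big.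
under eq_bigr do under eq_bigr do rewrite exchange_big.
under eq_bigr do under eq_bigr do under eq_bigr do rewrite -big_distrl sigma_complete /=.
transitivity (\sum_x 2%:R ^+ n * (Phi x * (Phi x)^* * w y)).
  apply: eq_bigr => x _.
  have split_delta y' x' :
    2%:R ^+ n * ((y == y') && (x == x'))%:R * (Phi x * (Phi x')^* * w y') =
    2%:R ^+ n * (y == y')%:R * ((x == x')%:R * (Phi x * (Phi x')^* * w y')).
    by rewrite -mulnb natrM; ring.
  under eq_bigr do under eq_bigr do rewrite split_delta.
  under eq_bigr do rewrite -big_distrr /= sumr_deltal -mulrA.
  by rewrite -big_distrr /= sumr_deltal.
by rewrite -big_distrr -big_distrl /= Phi_unit mul1r.
Qed.

End Stabilizer.

Section StabilizedVectors.
Variables (C : numClosedFieldType) (n : nat) (S : {set pauli n}) (T : pauli n -> Prop).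
Variable Phi : bits n -> C.
Hypotheses (Phi_unit : unit_vec Phi) (T_sub : forall g, T g -> g \in S).
Hypothesis S_stab : forall f, f \in S ->
  exists e : C, (e = 1 \/ e = -1) /\ eigvec (sigma C f) e Phi.
Hypothesis T_sep : forall f, f \notin S -> exists2 g, T g & omega f g.

Definition shares_eigvecs (w : bits n -> C) : Prop :=
  forall g, T g -> exists e : C,
    [/\ e = 1 \/ e = -1, eigvec (sigma C g) e Phi & eigvec (sigma C g) e w].

Lemma shares_eigvecs_self : shares_eigvecs Phi.
Proof. by move=> g /T_sub /S_stab [e [e_sign gPhi]]; exists e. Qed.

Lemma sum_pauli_proj_shared w : shares_eigvecs w ->
  forall y, 2%:R ^+ n * w y = #|S|%:R * dotv Phi w * Phi y.
Proof.
move=> w_shared y; rewrite -(sum_pauli_proj w y Phi_unit) (bigID (mem S)) /=.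
rewrite [X in _ + X]big1 ?addr0; last first.
  move=> f fNS; have [g Tg fg] := T_sep fNS; have [e [e_sign gPhi gw]] := w_shared g Tg.
  by rewrite (dotv_anticommuting_eigvec fg e_sign gPhi gw) mulr0.
rewrite -sum1_card natr_sum !big_distrl /=; apply: eq_bigr => f fS.
have [e [e_sign fPhi]] := S_stab fS; have [ee ce] := sign_sqr_conj e_sign.
have -> : dotv (apply_op (sigma C f) Phi) w = e * dotv Phi w.
  by rewrite /dotv big_distrr; apply: eq_bigr => x _; rewrite fPhi rmorphM /= ce mulrA.
by rewrite fPhi; transitivity (e * e * (dotv Phi w * Phi y)); [ring | rewrite ee; ring].
Qed.

Lemma unit_vec_neq0 : exists y, Phi y != 0.
Proof.
apply/existsP; apply: contraLR isT => /existsPn Phi0.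
have : \sum_x Phi x * (Phi x)^* = 0.
  by rewrite big1 // => x _; move/negPn/eqP: (Phi0 x) => ->; rewrite mul0r.
by rewrite Phi_unit => /eqP; rewrite oner_eq0.
Qed.

Lemma shared_eigvec_colinear w : shares_eigvecs w ->
  forall y, w y = dotv Phi w * Phi y.
Proof.
move=> w_shared y.
have dot_self : dotv Phi Phi = 1.
  by rewrite -Phi_unit; apply: eq_bigr => x _; rewrite mulrC.
have [y0 Phi_y0] := unit_vec_neq0.
have card_S : (2%:R ^+ n : C) = #|S|%:R.
  apply: (mulIf Phi_y0).
  by rewrite (sum_pauli_proj_shared shares_eigvecs_self) dot_self mulr1.
have two_n_neq0 : (2%:R ^+ n : C) != 0 by rewrite expf_neq0 // pnatr_eq0.
by apply: (mulfI two_n_neq0); rewrite (sum_pauli_proj_shared w_shared) card_S mulrA.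
Qed.

End StabilizedVectors.

Section PositiveOperators.
Variable C : numClosedFieldType.

Definition qform n (rho : op C n) (v : bits n -> C) : C :=
  \sum_x \sum_y (v x)^* * rho x y * v y.

Lemma qform_add_scale n (rho : op C n) v u (t : C) :
  qform rho (fun x => v x + t * u x) =
  qform rho v + t^* * (\sum_x \sum_y (u x)^* * rho x y * v y)
    + t * (\sum_x \sum_y (v x)^* * rho x y * u y) + t^* * t * qform rho u.
Proof.
rewrite /qform !big_distrr -!big_split /=; apply: eq_bigr => x _.
rewrite !big_distrr -!big_split /=; apply: eq_bigr => y _.
by rewrite rmorphD rmorphM /=; ring.
Qed.

Lemma quadratic_ge0_linear0 (s q : C) : 0 <= q ->
  (forall t : C, t \is Num.real -> 0 <= t * s + t ^+ 2 * q) -> s = 0.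
Proof.
move=> q_ge0 nonneg.
have s_real : s \is Num.real.
  have /ger0_real := nonneg 1 (rpred1 _); rewrite mul1r expr1n mul1r => sq_real.
  by rewrite -(addrK q s) rpredB // ger0_real.
have q1_gt0 : 0 < q + 1 by rewrite ltr_wpDl.
have q1_neq0 : q + 1 != 0 by rewrite gt_eqF.
pose t := - s / (q + 1).
have t_real : t \is Num.real by rewrite rpredM ?rpredN ?rpredV // ger0_real // ltW.
have := nonneg t t_real.
have -> : t * s + t ^+ 2 * q = - (s * s^* / (q + 1) ^+ 2).
  by rewrite (conj_Creal s_real) /t; field.
rewrite oppr_ge0 => ss_le0.
have ss_ge0 : 0 <= s * s^* / (q + 1) ^+ 2 by rewrite divr_ge0 ?mul_conjC_ge0 ?exprn_ge0 ?ltW.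
have /eqP : s * s^* / (q + 1) ^+ 2 = 0 by apply/eqP; rewrite eq_le ss_le0 ss_ge0.
by rewrite mulf_eq0 invr_eq0 expf_eq0 (negbTE q1_neq0) andbF orbF mul_conjC_eq0 => /eqP.
Qed.

Section Kernel.
Variables (n : nat) (rho : op C n).
Hypothesis rho_psd : forall u, 0 <= qform rho u.

(* Positivity of [qform rho (v + t u)] for real and imaginary [t] kills the two
   cross terms. *)
Lemma psd_qform0_cross v : qform rho v = 0 -> forall u,
  \sum_x \sum_y (u x)^* * rho x y * v y = 0 /\ \sum_x \sum_y (v x)^* * rho x y * u y = 0.
Proof.
move=> v0 u; set B := \sum_x \sum_y _; set A := \sum_x \sum_y (v x)^* * _ * _.
have qu_ge0 := rho_psd u.
have AB0 : A + B = 0.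
  apply: (quadratic_ge0_linear0 qu_ge0) => t t_real.
  have := rho_psd (fun x => v x + t * u x).
  by rewrite qform_add_scale v0 (conj_Creal t_real) -/A -/B; congr (0 <= _); ring.
have iAB0 : 'i * (A - B) = 0.
  apply: (quadratic_ge0_linear0 qu_ge0) => t t_real.
  have := rho_psd (fun x => v x + ('i * t) * u x).
  rewrite qform_add_scale v0 rmorphM /= (conj_Creal t_real) conjCi -/A -/B.
  congr (0 <= _); transitivity (t * ('i * (A - B)) - t ^+ 2 * ('i * 'i) * qform rho u).
    by ring.
  by rewrite mulCii; ring.
move/eqP: iAB0; rewrite mulf_eq0 (negbTE (neq0Ci C)) /= subr_eq0 => /eqP A_eq_B.
by move: AB0; rewrite A_eq_B -mulr2n => /eqP; rewrite mulrn_eq0 /= => /eqP.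
Qed.

Lemma psd_qform0_kernel v : qform rho v = 0 -> forall k,
  \sum_x (v x)^* * rho x k = 0 /\ \sum_y rho k y * v y = 0.
Proof.
move=> v0 k; have [cross_l cross_r] := psd_qform0_cross v0 (fun x => (k == x)%:R).
split.
  rewrite -[RHS]cross_r; apply: eq_bigr => x _.
  by rewrite (eq_bigr (fun y => (k == y)%:R * ((v x)^* * rho x y))) ?sumr_deltal // => y _; ring.
rewrite -[RHS]cross_l /=; rewrite -(sumr_deltal k (fun x => \sum_y rho x y * v y)).
apply: eq_bigr => x _; rewrite big_distrr; apply: eq_bigr => y _ /=.
by rewrite rmorph_nat; ring.
Qed.

End Kernel.
End PositiveOperators.

Section Involutions.
Variable C : numClosedFieldType.

(* Q = 2 P for an orthogonal projector P; Tr(rho P) = 0 makes every column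
   of P isotropic for rho, hence in its kernel. *)
Lemma psd_trace_mul_projector0 n (rho Q : op C n) :
  (forall u, 0 <= qform rho u) ->
  (forall y x, (Q y x)^* = Q x y) ->
  (forall y x, \sum_z Q y z * Q z x = 2%:R * Q y x) ->
  \sum_x \sum_y rho x y * Q y x = 0 ->
  forall y x, \sum_z Q y z * rho z x = 0 /\ \sum_z rho y z * Q z x = 0.
Proof.
move=> rho_psd Q_adj Q_sqr trQ0.
have qform_col0 : forall k, qform rho (fun x => Q x k) = 0.
  have sum0 : \sum_k qform rho (fun x => Q x k) = 0.
    transitivity (\sum_x \sum_y rho x y * \sum_k Q y k * Q k x).
      rewrite /qform exchange_big /=; apply: eq_bigr => x _.
      rewrite exchange_big /=; apply: eq_bigr => y _.
      by rewrite big_distrr /=; apply: eq_bigr => k _; rewrite Q_adj; ring.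
    under eq_bigr do under eq_bigr do rewrite Q_sqr mulrCA.
    by under eq_bigr do rewrite -big_distrr /=; rewrite -big_distrr /= trQ0 mulr0.
  by move=> k; apply: (psumr_eq0P _ sum0) => // i _; apply: rho_psd.
move=> y x; split.
  rewrite -[RHS](psd_qform0_kernel rho_psd (qform_col0 y) x).1.
  by apply: eq_bigr => z _; rewrite Q_adj.
exact: (psd_qform0_kernel rho_psd (qform_col0 x) y).2.
Qed.

Lemma density_fixed_by_involution n (rho G : op C n) (e : C) :
  density rho -> e = 1 \/ e = -1 ->
  (forall y x, (G y x)^* = G x y) ->
  (forall y x, \sum_z G y z * G z x = (y == x)%:R) ->
  \sum_x \sum_y rho x y * G y x = e ->
  forall y x, \sum_z G y z * rho z x = e * rho y x /\ \sum_z rho y z * G z x = e * rho y x.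
Proof.
move=> [rho_psd rho_tr] e_sign G_adj G_invol trG; have [ee ce] := sign_sqr_conj e_sign.
have sign_solve (a b : C) : a - e * b = 0 -> b = e * a.
  by move/eqP; rewrite subr_eq0 => /eqP ->; rewrite mulrA ee mul1r.
pose Q y x := ((y == x)%:R : C) - e * G y x.
have Q_adj y x : (Q y x)^* = Q x y.
  by rewrite rmorphB rmorphM rmorph_nat /= ce G_adj eq_sym.
have Q_sqr y x : \sum_z Q y z * Q z x = 2%:R * Q y x.
  rewrite (eq_bigr (fun z => (y == z)%:R * Q z x - e * (G y z * (z == x)%:R)
                            + e * e * (G y z * G z x))); last by move=> z _; rewrite /Q; ring.
  by rewrite !big_split /= sumrN sumr_deltal -!big_distrr /= sumr_deltar G_invol ee /Q; ring.
have trQ : \sum_x \sum_y rho x y * Q y x = 0.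
  rewrite (eq_bigr (fun x => rho x x - e * \sum_y rho x y * G y x)); last first.
    move=> x _; rewrite big_distrr -sumr_deltar -sumrB.
    by apply: eq_bigr => y _ /=; rewrite /Q; ring.
  by rewrite sumrB -big_distrr /= trG rho_tr ee subrr.
move=> y x; have [Qrho rhoQ] := psd_trace_mul_projector0 rho_psd Q_adj Q_sqr trQ y x.
split; apply: sign_solve.
  rewrite -[RHS]Qrho big_distrr -(sumr_deltal y (rho^~ x)) -sumrB.
  by apply: eq_bigr => z _ /=; rewrite /Q; ring.
rewrite -[RHS]rhoQ big_distrr -(sumr_deltar x (rho y)) -sumrB.
by apply: eq_bigr => z _ /=; rewrite /Q; ring.
Qed.

End Involutions.

Section PartialTrace.
Variables (C : numClosedFieldType) (n M : nat) (party : 'I_n -> 'I_M) (a : 'I_M).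

Definition bits0 : bits n := [ffun _ => false].
Definition clear_party (x : bits n) : bits n := Defs.merge party a x bits0.
Definition restrict_party (x : bits n) : bits n := Defs.merge party a bits0 x.
Definition on_party (z : bits n) : bool := [forall j, (party j != a) ==> ~~ z j].

Lemma restrict_merge x z : on_party z -> restrict_party (Defs.merge party a x z) = z.
Proof.
move=> /forallP z_on; apply/ffunP => j; rewrite !ffunE.
case: ifP => party_j; first by rewrite party_j.
by move: (z_on j); rewrite party_j /= => /negbTE ->.
Qed.

Lemma clear_merge x z : clear_party (Defs.merge party a x z) = clear_party x.
Proof. by apply/ffunP => j; rewrite !ffunE; case: (party j == a). Qed.

Lemma merge_clear_restrict x : Defs.merge party a (clear_party x) (restrict_party x) = x.
Proof. by apply/ffunP => j; rewrite !ffunE; case: (party j == a). Qed.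

Lemma merge_restrict x : Defs.merge party a x (restrict_party x) = x.
Proof. by apply/ffunP => j; rewrite !ffunE; case: (party j == a). Qed.

Lemma on_party_restrict x : on_party (restrict_party x).
Proof. by apply/forallP => j; rewrite !ffunE; case: (party j == a). Qed.

Lemma restrict_party_neq x y : restrict_party x != restrict_party y ->
  exists2 j, party j = a & x j != y j.
Proof.
move=> xy; have /existsP[j /andP[/eqP party_j xy_j]] :
    [exists j, (party j == a) && (x j != y j)].
  apply: contraR xy => /existsPn xy; apply/eqP/ffunP => j; rewrite !ffunE.
  by case: ifP => // party_j; move: (xy j); rewrite party_j negbK => /eqP.
by exists j.
Qed.

Lemma eq_merge (u v z : bits n) :
  (Defs.merge party a u z == Defs.merge party a v z) = [forall j, (party j != a) ==> (u j == v j)].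
Proof.
apply/eqP/forallP => [uv j | uv]; last first.
  apply/ffunP => j; rewrite !ffunE; case: ifP => // /negbT party_j.
  by move/implyP/(_ party_j)/eqP: (uv j).
by apply/implyP => party_j; move/ffunP/(_ j): uv; rewrite !ffunE (negbTE party_j) => ->.
Qed.

Lemma sum_merge (z : bits n) (F : bits n -> C) : on_party z ->
  \sum_(x | clear_party x == x) F (Defs.merge party a x z) =
  \sum_(x | restrict_party x == z) F x.
Proof.
move=> z_on; symmetry.
rewrite (reindex_onto (fun x => Defs.merge party a x z) clear_party) /=; last first.
  by move=> x /eqP <-; rewrite merge_clear_restrict.
by apply: eq_bigl => x; rewrite restrict_merge // eqxx clear_merge.
Qed.

(* The two hypotheses say that G acts as the identity on the qubits of party a. *)
Lemma trace_mul_ptrace (rho G : op C n) :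
  (forall y x : bits n, (exists2 j, party j = a & y j != x j) -> G y x = 0) ->
  (forall y x z, on_party z ->
     G (Defs.merge party a y z) (Defs.merge party a x z) = G (clear_party y) (clear_party x)) ->
  \sum_x \sum_y rho x y * G y x =
  \sum_(x | clear_party x == x) \sum_(y | clear_party y == y) ptrace party a rho x y * G y x.
Proof.
move=> G_diag G_local.
transitivity (\sum_(z | on_party z) \sum_(x | clear_party x == x) \sum_(y | clear_party y == y)
                rho (Defs.merge party a x z) (Defs.merge party a y z) *
                G (Defs.merge party a y z) (Defs.merge party a x z)); last first.
  rewrite exchange_big /=; apply: eq_bigr => x /eqP x_clear.
  rewrite exchange_big /=; apply: eq_bigr => y /eqP y_clear.
  rewrite /ptrace big_distrl /=; apply: eq_bigr => z z_on.
  by rewrite G_local // x_clear y_clear.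
rewrite (partition_big restrict_party on_party) /=; last by move=> x _; apply: on_party_restrict.
apply: eq_bigr => z z_on; rewrite -sum_merge //; apply: eq_bigr => x _.
rewrite (sum_merge (fun y => rho (Defs.merge party a x z) y * G y (Defs.merge party a x z))) //.
rewrite (bigID (fun y => restrict_party y == z)) /= [X in _ + X]big1 ?addr0 // => y y_off.
rewrite G_diag ?mulr0 //; apply: restrict_party_neq.
by rewrite restrict_merge.
Qed.

Lemma ptrace_proj_neq0 (Phi : bits n -> C) : unit_vec Phi ->
  exists x, ptrace party a (proj Phi) x x != 0.
Proof.
move=> Phi_unit; have [x Phi_x] := unit_vec_neq0 Phi_unit; exists x; apply/eqP => ptr0.
have terms_ge0 z : on_party z -> 0 <= proj Phi (Defs.merge party a x z) (Defs.merge party a x z).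
  by move=> _; apply: mul_conjC_ge0.
have := psumr_eq0P terms_ge0 ptr0 (on_party_restrict x).
by rewrite merge_restrict => /eqP; rewrite /proj mul_conjC_eq0 (negbTE Phi_x).
Qed.

End PartialTrace.

Lemma sum_catb (R : nmodType) n1 n2 (F : bits (n1 + n2) -> R) :
  \sum_x F x = \sum_a \sum_b F (catb a b).
Proof.
rewrite pair_big (reindex (fun p : bits n1 * bits n2 => catb p.1 p.2)) //.
exists (fun x => (lpart x, rpart x)) => [[a b] _ | x _] /=.
  by rewrite lpart_catb rpart_catb.
by rewrite catb_parts.
Qed.

Section Tensor.
Variables (C : numClosedFieldType) (n1 n2 : nat).

Lemma proj_tensor_vec (u : bits n1 -> C) (v : bits n2 -> C) :
  proj (tensor_vec u v) = tensor_op (proj u) (proj v).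
Proof.
apply: functional_extensionality => x; apply: functional_extensionality => y.
by rewrite /proj /tensor_vec /tensor_op rmorphM /=; ring.
Qed.

Lemma unit_vec_tensor (u : bits n1 -> C) (v : bits n2 -> C) :
  unit_vec u -> unit_vec v -> unit_vec (tensor_vec u v).
Proof.
move=> u_unit v_unit; rewrite /unit_vec sum_catb -[RHS]u_unit; apply: eq_bigr => x1 _.
rewrite -[RHS]mulr1 -v_unit big_distrr; apply: eq_bigr => x2 _ /=.
by rewrite /tensor_vec lpart_catb rpart_catb rmorphM /=; ring.
Qed.

Lemma trace_tensor_proj (A : op C n1) (Phi : bits n2 -> C) :
  unit_vec Phi -> \sum_x tensor_op A (proj Phi) x x = \sum_x A x x.
Proof.
move=> Phi_unit; rewrite sum_catb; apply: eq_bigr => x1 _.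
rewrite -[RHS]mulr1 -Phi_unit big_distrr; apply: eq_bigr => x2 _ /=.
by rewrite /tensor_op lpart_catb rpart_catb.
Qed.

Lemma qform_tensor_proj (A : op C n1) (Phi : bits n2 -> C) (v : bits (n1 + n2) -> C) :
  qform (tensor_op A (proj Phi)) v = qform A (fun x1 => \sum_x2 (Phi x2)^* * v (catb x1 x2)).
Proof.
rewrite /qform sum_catb; apply: eq_bigr => x1 _.
transitivity (\sum_x2 \sum_y1 \sum_y2
  (v (catb x1 x2))^* * A x1 y1 * (Phi x2 * (Phi y2)^*) * v (catb y1 y2)).
  apply: eq_bigr => x2 _; rewrite sum_catb; apply: eq_bigr => y1 _; apply: eq_bigr => y2 _.
  by rewrite /tensor_op /proj !lpart_catb !rpart_catb; ring.
rewrite exchange_big /=; apply: eq_bigr => y1 _.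
rewrite rmorph_sum !big_distrl /=; apply: eq_bigr => x2 _.
by rewrite big_distrr /=; apply: eq_bigr => y2 _; rewrite rmorphM /= conjCK; ring.
Qed.

Lemma qform_tensor_proj_vec (A : op C n1) (Phi : bits n2 -> C) (u : bits n1 -> C) :
  unit_vec Phi -> qform (tensor_op A (proj Phi)) (tensor_vec u Phi) = qform A u.
Proof.
move=> Phi_unit; rewrite qform_tensor_proj; apply: eq_bigr => x _; apply: eq_bigr => y _.
suff coef z : \sum_x2 (Phi x2)^* * tensor_vec u Phi (catb z x2) = u z by rewrite !coef.
rewrite -[RHS]mulr1 -Phi_unit big_distrr; apply: eq_bigr => x2 _ /=.
by rewrite /tensor_vec lpart_catb rpart_catb; ring.
Qed.

Variables (M : nat) (p1 : 'I_n1 -> 'I_M) (p2 : 'I_n2 -> 'I_M) (a : 'I_M).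
Notation party := (join_party p1 p2).

Lemma lpart_merge (x z : bits (n1 + n2)) :
  lpart (Defs.merge party a x z) = Defs.merge p1 a (lpart x) (lpart z).
Proof. by apply/ffunP => i; rewrite !ffunE join_party_lshift. Qed.

Lemma rpart_merge (x z : bits (n1 + n2)) :
  rpart (Defs.merge party a x z) = Defs.merge p2 a (rpart x) (rpart z).
Proof. by apply/ffunP => i; rewrite !ffunE join_party_rshift. Qed.

Lemma on_party_catb (z1 : bits n1) (z2 : bits n2) :
  on_party party a (catb z1 z2) = on_party p1 a z1 && on_party p2 a z2.
Proof.
apply/forallP/andP => [z_on | [/forallP z1_on /forallP z2_on] j].
  split; apply/forallP => i.
    by move: (z_on (lshift n2 i)); rewrite join_party_lshift ffunE (unsplitK (inl i)).
  by move: (z_on (rshift n1 i)); rewrite join_party_rshift ffunE (unsplitK (inr i)).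
case: (splitP j) => i j_eq.
  rewrite (_ : j = lshift n2 i); last exact: val_inj.
  by rewrite join_party_lshift ffunE (unsplitK (inl i)).
rewrite (_ : j = rshift n1 i); last exact: val_inj.
by rewrite join_party_rshift ffunE (unsplitK (inr i)).
Qed.

Lemma ptrace_tensor (A : op C n1) (B : op C n2) x y :
  ptrace party a (tensor_op A B) x y =
  ptrace p1 a A (lpart x) (lpart y) * ptrace p2 a B (rpart x) (rpart y).
Proof.
rewrite /ptrace big_mkcond sum_catb.
rewrite [X in _ = X * _]big_mkcond [X in _ = _ * X]big_mkcond big_distrl /=.
apply: eq_bigr => z1 _; rewrite big_distrr /=; apply: eq_bigr => z2 _.
rewrite -[[forall j, _]]/(on_party _ _ _) on_party_catb /tensor_op.
rewrite !lpart_merge !rpart_merge lpart_catb rpart_catb.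
by rewrite /on_party; case: [forall i, _]; case: [forall i, _]; rewrite /= ?mulr0 ?mul0r.
Qed.

End Tensor.

Lemma colocal_trivial n M (party : 'I_n -> 'I_M) (S : {set pauli n}) a g :
  g \in colocal party S a -> forall j, party j = a -> g j = (false, false).
Proof.
rewrite inE => /andP[_ /forallP g_triv] j party_j.
by move: (g_triv j); rewrite party_j eqxx => /eqP.
Qed.

Section LiftedPauli.
Variables (C : numClosedFieldType) (n1 n2 M : nat).
Variables (p1 : 'I_n1 -> 'I_M) (p2 : 'I_n2 -> 'I_M) (a : 'I_M).
Notation party := (join_party p1 p2).

Definition lift_sigma (g : pauli n2) : op C (n1 + n2) :=
  fun y x => (lpart y == lpart x)%:R * sigma C g (rpart y) (rpart x).

Lemma lift_sigma_adj g y x : (lift_sigma g y x)^* = lift_sigma g x y.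
Proof. by rewrite /lift_sigma rmorphM rmorph_nat /= sigma_adj eq_sym. Qed.

Lemma lift_sigma_invol g y x : \sum_z lift_sigma g y z * lift_sigma g z x = (y == x)%:R.
Proof.
rewrite sum_catb eq_bits_parts.
transitivity (\sum_z1 (lpart y == z1)%:R * ((z1 == lpart x)%:R * (rpart y == rpart x)%:R) : C).
  apply: eq_bigr => z1 _; rewrite -(sigma_invol C g) !big_distrr /=.
  by apply: eq_bigr => z2 _; rewrite /lift_sigma !lpart_catb !rpart_catb; ring.
by rewrite sumr_deltal -natrM mulnb.
Qed.

Section TrivialOnParty.
Variable g : pauli n2.
Hypothesis g_triv : forall j, p2 j = a -> g j = (false, false).

Lemma lift_sigma_offdiag (y x : bits (n1 + n2)) :
  (exists2 j, party j = a & y j != x j) -> lift_sigma g y x = 0.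
Proof.
case=> j party_j yx_j; rewrite /lift_sigma; case: (splitP j) => i j_eq.
  suff /negbTE -> : lpart y != lpart x by rewrite mul0r.
  apply: contra yx_j => /eqP/ffunP/(_ i); rewrite !ffunE => yx_i.
  by rewrite (_ : j = lshift n2 i) ?yx_i //; apply: val_inj.
have j_eq' : j = rshift n1 i by apply: val_inj.
have g_i : g i = (false, false) by apply: g_triv; rewrite -(join_party_rshift p1) -j_eq'.
rewrite /sigma (bigD1 i) //= g_i /sigma1 /= !ffunE -j_eq' addbF.
by rewrite (negbTE yx_j) !mul0r mulr0.
Qed.

Lemma lift_sigma_merge y x z :
  lift_sigma g (Defs.merge party a y z) (Defs.merge party a x z) =
  lift_sigma g (clear_party party a y) (clear_party party a x).
Proof.
rewrite /lift_sigma /clear_party !lpart_merge !rpart_merge !eq_merge; congr (_ * _).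
apply: eq_bigr => i _; rewrite !ffunE; case: ifP => // /eqP party_i.
by rewrite g_triv // /sigma1 /= !addbF !eqxx.
Qed.

End TrivialOnParty.

Lemma lift_sigma_expect g (Psi : bits n1 -> C) (Phi : bits n2 -> C) (e : C) :
  unit_vec Psi -> unit_vec Phi -> eigvec (sigma C g) e Phi ->
  \sum_x \sum_y proj (tensor_vec Psi Phi) x y * lift_sigma g y x = e.
Proof.
move=> Psi_unit Phi_unit g_Phi; set v := tensor_vec Psi Phi.
have lift_v y : \sum_x lift_sigma g y x * v x = e * v y.
  transitivity (\sum_x1 (lpart y == x1)%:R * (Psi x1 * (e * Phi (rpart y)))); last first.
    by rewrite sumr_deltal /v /tensor_vec; ring.
  rewrite sum_catb; apply: eq_bigr => x1 _; rewrite -g_Phi /apply_op !big_distrr /=.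
  by apply: eq_bigr => x2 _; rewrite /lift_sigma /v /tensor_vec !lpart_catb !rpart_catb; ring.
have v_unit : unit_vec v by apply: unit_vec_tensor.
rewrite exchange_big /= -[RHS]mulr1 -v_unit big_distrr /=; apply: eq_bigr => y _.
transitivity ((v y)^* * \sum_x lift_sigma g y x * v x); last by rewrite lift_v; ring.
by rewrite big_distrr; apply: eq_bigr => x _ /=; rewrite /proj; ring.
Qed.

Lemma lift_sigma_column (rho : op C (n1 + n2)) g e :
  (forall y x, \sum_z lift_sigma g y z * rho z x = e * rho y x) ->
  forall y1 x, eigvec (sigma C g) e (fun y2 => rho (catb y1 y2) x).
Proof.
move=> g_rho y1 x y2; rewrite -g_rho sum_catb.
transitivity (\sum_z1 (y1 == z1)%:R * \sum_z2 sigma C g y2 z2 * rho (catb z1 z2) x).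
  by rewrite sumr_deltal.
apply: eq_bigr => z1 _; rewrite big_distrr; apply: eq_bigr => z2 _ /=.
by rewrite /lift_sigma !lpart_catb !rpart_catb; ring.
Qed.

Lemma lift_sigma_row (rho : op C (n1 + n2)) g e : e^* = e ->
  (forall y x, \sum_z rho y z * lift_sigma g z x = e * rho y x) ->
  forall y1 x, eigvec (sigma C g) e (fun y2 => (rho x (catb y1 y2))^*).
Proof.
move=> e_real rho_g y1 x y2; rewrite -[in RHS]e_real -rmorphM /= -rho_g rmorph_sum sum_catb.
transitivity (\sum_z1 (y1 == z1)%:R * \sum_z2 sigma C g y2 z2 * (rho x (catb z1 z2))^*).
  by rewrite sumr_deltal.
apply: eq_bigr => z1 _; rewrite big_distrr; apply: eq_bigr => z2 _ /=.
by rewrite rmorphM /= lift_sigma_adj /lift_sigma !lpart_catb !rpart_catb; ring.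
Qed.

End LiftedPauli.

Section TensorWithPhi.
Variables (C : numClosedFieldType) (M n1 n2 : nat).
Variables (p1 : 'I_n1 -> 'I_M) (p2 : 'I_n2 -> 'I_M).
Notation party := (join_party p1 p2).
Variables (Psi : bits n1 -> C) (Phi : bits n2 -> C).
Hypotheses (Psi_unit : unit_vec Psi) (Phi_unit : unit_vec Phi).

Lemma density_tensor_proj (A : op C n1) :
  density (tensor_op A (proj Phi)) <-> density A.
Proof.
rewrite /density trace_tensor_proj //; split=> -[A_psd A_tr]; split=> // v.
  by rewrite -/(qform _ _) -(qform_tensor_proj_vec A v Phi_unit); apply: A_psd.
by rewrite -/(qform _ _) qform_tensor_proj; apply: A_psd.
Qed.

Lemma Gamma_tensor_proj (A : op C n1) :
  Gamma party (tensor_vec Psi Phi) (tensor_op A (proj Phi)) <-> Gamma p1 Psi A.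
Proof.
rewrite /Gamma density_tensor_proj proj_tensor_vec.
split=> -[A_dens A_marg]; split=> // a x y; last by rewrite !ptrace_tensor A_marg.
have [x2 Phi_x2] := ptrace_proj_neq0 p2 a Phi_unit.
apply: (mulIf Phi_x2).
by have := A_marg a (catb x x2) (catb y x2); rewrite !ptrace_tensor !lpart_catb !rpart_catb.
Qed.

Lemma Gamma_lift_sigma_fixed (rho : op C (n1 + n2)) (g : pauli n2) a (e : C) :
  Gamma party (tensor_vec Psi Phi) rho ->
  (forall j, p2 j = a -> g j = (false, false)) ->
  e = 1 \/ e = -1 -> eigvec (sigma C g) e Phi ->
  forall y x, \sum_z @lift_sigma C n1 n2 g y z * rho z x = e * rho y x /\
              \sum_z rho y z * @lift_sigma C n1 n2 g z x = e * rho y x.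
Proof.
move=> [rho_dens rho_marg] g_triv e_sign g_Phi.
apply: density_fixed_by_involution => //; [exact: lift_sigma_adj | exact: lift_sigma_invol |].
have offdiag := lift_sigma_offdiag C (p1 := p1) g_triv.
have merge_inv y x z (_ : on_party party a z) := lift_sigma_merge C p1 g_triv y x z.
rewrite -(lift_sigma_expect Psi_unit Phi_unit g_Phi).
rewrite !(trace_mul_ptrace _ offdiag merge_inv).
by apply: eq_bigr => x _; apply: eq_bigr => y _; rewrite rho_marg.
Qed.

(* The columns and rows of rho, as vectors of the second register, share the
   eigenvectors of the colocal stabilizers of Phi, hence are multiples of Phi. *)
Lemma Gamma_tensor_factor (S : {set pauli n2}) (rho : op C (n1 + n2)) :
  stabilizer_state S Phi -> sum_of_colocal p2 S -> Gamma party (tensor_vec Psi Phi) rho ->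
  exists A : op C n1, rho = tensor_op A (proj Phi).
Proof.
move=> [S_dual [_ S_stab]] S_sum rho_Gamma.
pose T g := exists a, g \in colocal p2 S a.
have T_sub g : T g -> g \in S by case=> a; rewrite inE => /andP[].
have T_sep f : f \notin S -> exists2 g, T g & omega f g.
  by move=> fNS; have [g [gT fg]] := anticommuting_colocal S_dual S_sum fNS; exists g.
have fixed g : T g -> exists e : C, [/\ e = 1 \/ e = -1, eigvec (sigma C g) e Phi &
    forall y x, \sum_z @lift_sigma C n1 n2 g y z * rho z x = e * rho y x /\
                \sum_z rho y z * @lift_sigma C n1 n2 g z x = e * rho y x].
  move=> Tg; have [a g_colocal] := Tg; have [e [e_sign g_Phi]] := S_stab g (T_sub g Tg).
  exists e; split=> //.
  exact: Gamma_lift_sigma_fixed rho_Gamma (colocal_trivial g_colocal) e_sign g_Phi.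
have col y1 x : shares_eigvecs T Phi (fun y2 => rho (catb y1 y2) x).
  move=> g /fixed [e [e_sign g_Phi g_rho]]; exists e; split=> //.
  by apply: lift_sigma_column => y' x'; case: (g_rho y' x').
have row y1 x : shares_eigvecs T Phi (fun y2 => (rho x (catb y1 y2))^*).
  move=> g /fixed [e [e_sign g_Phi g_rho]]; exists e; split=> //.
  apply: lift_sigma_row => [|y' x']; first by case: (sign_sqr_conj e_sign).
  by case: (g_rho y' x').
have colinear := shared_eigvec_colinear Phi_unit T_sub S_stab T_sep.
have row_eq x y1 y2 : rho x (catb y1 y2) = (\sum_w rho x (catb y1 w) * Phi w) * (Phi y2)^*.
  have /= row_colinear := colinear _ (row y1 x) y2.
  rewrite -[rho x _]conjCK row_colinear rmorphM /= rmorph_sum; congr (_ * _).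
  by apply: eq_bigr => w _; rewrite /= rmorphM /= !conjCK mulrC.
exists (fun x1 y1 => \sum_z \sum_w (Phi z)^* * rho (catb x1 z) (catb y1 w) * Phi w).
apply: functional_extensionality => x; apply: functional_extensionality => y.
rewrite -(catb_parts x) -(catb_parts y) /tensor_op /proj !lpart_catb !rpart_catb.
rewrite (colinear _ (col _ _) (rpart x)) /dotv !big_distrl; apply: eq_bigr => z _ /=.
by rewrite row_eq !(big_distrl, big_distrr) /=; apply: eq_bigr => w _; ring.
Qed.

End TensorWithPhi.

Unset Implicit Arguments.

Theorem corollary1 (C : numClosedFieldType) (M n1 n2 : nat)
  (p1 : 'I_n1 -> 'I_M) (p2 : 'I_n2 -> 'I_M)
  (S1 : {set pauli n1}) (S2 : {set pauli n2})
  (Psi' : bits n1 -> C) (Phi : bits n2 -> C) :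
  stabilizer_state S1 Psi' ->
  stabilizer_state S2 Phi ->
  sum_of_colocal p2 S2 ->
  forall rho : op C (n1 + n2),
    Gamma (join_party p1 p2) (tensor_vec Psi' Phi) rho <->
    exists rho' : op C n1,
      Gamma p1 Psi' rho' /\ rho = tensor_op rho' (proj Phi).
Proof.
move=> [_ [Psi_unit _]] Phi_stab S2_sum rho.
have Phi_unit : unit_vec Phi by case: Phi_stab => _ [].
have Gamma_iff := Gamma_tensor_proj p1 p2 Psi' Phi_unit.
split=> [rho_Gamma | [rho' [rho'_Gamma ->]]]; last exact/Gamma_iff.
have [rho' rho_eq] := Gamma_tensor_factor Psi_unit Phi_unit Phi_stab S2_sum rho_Gamma.
by exists rho'; split=> //; apply/Gamma_iff; rewrite -rho_eq.
Qed.
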